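(* For all CCSK transitions $t,u$: $t,u$ are key independent if and only if $t\odot u$.
   Context: Names $\mathsf N$ with bijection $\overline\cdot$ onto disjoint co-names; $\mathsf L=\mathsf N\cup\overline{\mathsf N}\cup\{\tau\}$ ($\alpha,\beta$ over $\mathsf L$, $\lambda$ over $\mathsf L\setminus\{\tau\}$); keys $\mathsf K$ denumerable. CCSK processes $X::=\mathbf 0\mid\alpha.X\mid X\backslash\lambda\mid X+Y\mid X|Y\mid\alpha[k].X$; $\mathrm{keys}(X)$ keys in $X$. Directions $D\in\{\mathrm L,\mathrm R\}$, $\bar{\mathrm L}=\mathrm R$, $\bar{\mathrm R}=\mathrm L$. Proof keyed labels $\theta::=\upsilon\alpha[k]\mid\upsilon\langle\upsilon_1\lambda[k],\upsilon_2\overline\lambda[k]\rangle$ ($\upsilon,\upsilon_i\in\{|_{\mathrm L},|_{\mathrm R},+_{\mathrm L},+_{\mathrm R}\}^*$), $\ell(\upsilon\alpha[k])=\alpha$, $\ell(\upsilon\langle\cdots\rangle)=\tau$, $\mathrm{key}(\theta)=k$. Forward CCSK$^{\mathrm P}$ transitions: least relation closed under (act) $\alpha.X\xrightarrow{\alpha[k]}\alpha[k].X$ if $\mathrm{keys}(X)=\emptyset$; (pre) $X\xrightarrow\theta X',\mathrm{key}(\theta)\ne k\Rightarrow\alpha[k].X\xrightarrow\theta\alpha[k].X'$; (res) $X\xrightarrow\theta X',\ell(\theta)\notin\{\lambda,\overline\lambda\}\Rightarrow X\backslash\lambda\xrightarrow\theta X'\backslash\lambda$; (par) $X\xrightarrow\theta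 X',\mathrm{key}(\theta)\notin\mathrm{keys}(Y)\Rightarrow X|Y\xrightarrow{|_{\mathrm L}\theta}X'|Y$, $Y|X\xrightarrow{|_{\mathrm R}\theta}Y|X'$; (syn) $X\xrightarrow{\upsilon_1\lambda[k]}X',Y\xrightarrow{\upsilon_2\overline\lambda[k]}Y'\Rightarrow X|Y\xrightarrow{\langle\upsilon_1\lambda[k],\upsilon_2\overline\lambda[k]\rangle}X'|Y'$; (sum) $X\xrightarrow\theta X',\mathrm{keys}(Y)=\emptyset\Rightarrow X+Y\xrightarrow{+_{\mathrm L}\theta}X'+Y$, $Y+X\xrightarrow{+_{\mathrm R}\theta}Y+X'$. Backward transitions are converses; $\bar t$ is the inverse of $t$. Paths are sequences of composable transitions; $\mathrm{keys}(r)$ is the set of keys of transitions of $r$; only processes reachable by a path from a key-free process are considered. Transitions are connected if there is a path from the source of one to the target of the other. CCSK: same processes, each CCSK$^{\mathrm P}$ transition with label $\theta$ gives a CCSK transition with label $\ell(\theta)[\mathrm{key}(\theta)]$ (bijection; $\hat t$ the CCSK$^{\mathrm P}$ transition of $t$). Independence $\iota$ on proof labels: least relation closed under (C1) $+_D\theta\mathrel\iota+_D\theta'$ if $\theta\mathrel\iota\theta'$; (P1) $|_D\theta\mathrel\iota|_D\theta'$ if $\theta\mathrel\iota\theta'$; (P2$_k$) $|_D\theta\mathrel\iota|_{\bar D}\theta'$ if keys differ; (S1) $|_D\theta\mathrel\iota\langle\theta_{\mathrm L},\theta_{\mathrm R}\rangle$ if $\theta\mathrel\iota\theta_D$; (S2)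 $\langle\theta_{\mathrm L},\theta_{\mathrm R}\rangle\mathrel\iota|_D\theta$ if $\theta_D\mathrel\iota\theta$; (S3) $\langle\theta_1,\theta_2\rangle\mathrel\iota\langle\theta_1',\theta_2'\rangle$ if $\theta_1\mathrel\iota\theta_1'$, $\theta_2\mathrel\iota\theta_2'$. For CCSK transitions $t\mathrel\iota u$ iff connected and labels of $\hat t,\hat u$ satisfy $\iota$. Event equivalence $\sim$ on CCSK transitions: smallest equivalence with $t\sim t'$ whenever $t:P\to Q$, $u:P\to R$, $u':Q\to S$, $t':R\to S$ ($u'$ with label and direction of $u$, $t'$ of $t$) and $t\mathrel\iota u$; events are classes $[t]$. Core independence: $t\odot u$ iff there are coinitial $t'\in[t]$, $u'\in[u]$ with $t'\mathrel\iota u'$. Event key equivalence $\sim_{\mathsf k}$: forward $t_1:X_1\to X_1'$, $t_2:X_2\to X_2'$ with the same key $k$ satisfy $t_1\sim_{\mathsf k}t_2$ iff there is a path from $X_1'$ to $X_2'$ not using key $k$; in general $t_1\sim_{\mathsf k}t_2$ iff $\mathrm{fwd}(t_1)\sim_{\mathsf k}\mathrm{fwd}(t_2)$ with $\mathrm{fwd}(t)=t$ if forward, $\bar t$ otherwise. Transitions $t:P\to Q$ with label $\alpha[m]$ and $u:P\to R$ with label $\beta[n]$ are directly key independent if $m\ne n$ and there are $u':Q\to S$ with label $\beta[n]$ (direction of $u$) and $t':R\to S$ with label $\alpha[m]$ (direction of $t$). Connected CCSK transitions $t,u$ are key independent if there are $t',u'$ with $t\sim_{\mathsf k}t'$, $u\sim_{\mathsf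 k}u'$ and $t',u'$ directly key independent. *)

From Stdlib Require Import List Relations.
Import ListNotations.
Set Implicit Arguments.

Section CCSK.
Context {N : Type}.

Inductive act := Nm (a : N) | CoNm (a : N).
Inductive label := Vis (l : act) | Tau.
Definition compl (l : act) : act :=
  match l with Nm a => CoNm a | CoNm a => Nm a end.

Definition key := nat.

Inductive proc :=
| Nil
| Pre (a : label) (X : proc)
| Res (X : proc) (l : act)
| Sum (X Y : proc)
| Par (X Y : proc)
| KPre (a : label) (k : key) (X : proc).

Fixpoint keys (X : proc) : list key :=
  match X with
  | Nil => []
  | Pre _ X => keys X
  | Res X _ => keys X
  | Sum X Y => keys X ++ keys Y
  | Par X Y => keys X ++ keys Y
  | KPre _ k X => k :: keys X
  end.

Inductive dir := DL | DR.
Definition flip (d : dir) := match d with DL => DR | DR => DL end.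

(* proof keyed labels: a prefix upsilon of tags |_D, +_D over either an
   action alpha[k] or a synchronisation <theta_L, theta_R> *)
Inductive plab :=
| PAct (a : label) (k : key)
| PPar (d : dir) (th : plab)
| PSum (d : dir) (th : plab)
| PSyn (thL thR : plab).

Fixpoint ell (th : plab) : label :=
  match th with
  | PAct a _ => a
  | PPar _ th => ell th
  | PSum _ th => ell th
  | PSyn _ _ => Tau
  end.

Fixpoint pkey (th : plab) : key :=
  match th with
  | PAct _ k => k
  | PPar _ th => pkey th
  | PSum _ th => pkey th
  | PSyn thL _ => pkey thL
  end.

Inductive pfwd : proc -> plab -> proc -> Prop :=
| r_act a X k : keys X = [] -> pfwd (Pre a X) (PAct a k) (KPre a k X)
| r_pre a k X th X' : pfwd X th X' -> pkey th <> k ->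
    pfwd (KPre a k X) th (KPre a k X')
| r_res l X th X' : pfwd X th X' -> ell th <> Vis l -> ell th <> Vis (compl l) ->
    pfwd (Res X l) th (Res X' l)
| r_parL X Y th X' : pfwd X th X' -> ~ In (pkey th) (keys Y) ->
    pfwd (Par X Y) (PPar DL th) (Par X' Y)
| r_parR X Y th X' : pfwd X th X' -> ~ In (pkey th) (keys Y) ->
    pfwd (Par Y X) (PPar DR th) (Par Y X')
| r_syn l X Y th1 th2 X' Y' : pfwd X th1 X' -> pfwd Y th2 Y' ->
    ell th1 = Vis l -> ell th2 = Vis (compl l) -> pkey th1 = pkey th2 ->
    pfwd (Par X Y) (PSyn th1 th2) (Par X' Y')
| r_sumL X Y th X' : pfwd X th X' -> keys Y = [] ->
    pfwd (Sum X Y) (PSum DL th) (Sum X' Y)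
| r_sumR X Y th X' : pfwd X th X' -> keys Y = [] ->
    pfwd (Sum Y X) (PSum DR th) (Sum Y X').

Definition cfwd (P : proc) (a : label) (k : key) (Q : proc) : Prop :=
  exists th, pfwd P th Q /\ ell th = a /\ pkey th = k.

Record ctrans := CT { src : proc; lab : label; tkey : key; tgt : proc; fw : bool }.

Definition cstep (t : ctrans) : Prop :=
  if fw t then cfwd (src t) (lab t) (tkey t) (tgt t)
  else cfwd (tgt t) (lab t) (tkey t) (src t).

Definition step (P Q : proc) : Prop :=
  exists a k, cfwd P a k Q \/ cfwd Q a k P.
Definition path : relation proc := clos_refl_trans proc step.

Definition step_avoid (k : key) (P Q : proc) : Prop :=
  exists a j, j <> k /\ (cfwd P a j Q \/ cfwd Q a j P).
Definition path_avoid (k : key) : relation proc :=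
  clos_refl_trans proc (step_avoid k).

Definition reachable (P : proc) : Prop := exists X0, keys X0 = [] /\ path X0 P.

Definition valid (t : ctrans) : Prop := reachable (src t) /\ cstep t.

Definition connected (t u : ctrans) : Prop := path (src t) (tgt u).

Definition hat (t : ctrans) (th : plab) : Prop :=
  (if fw t then pfwd (src t) th (tgt t) else pfwd (tgt t) th (src t)) /\
  ell th = lab t /\ pkey th = tkey t.

Definition side (d : dir) (thL thR : plab) := match d with DL => thL | DR => thR end.

Inductive iota : plab -> plab -> Prop :=
| i_C1 d th th' : iota th th' -> iota (PSum d th) (PSum d th')
| i_P1 d th th' : iota th th' -> iota (PPar d th) (PPar d th')
| i_P2 d th th' : pkey th <> pkey th' -> iota (PPar d th) (PPar (flip d) th')
| i_S1 d th thL thR : iota th (side d thL thR) -> iota (PPar d th) (PSyn thL thR)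
| i_S2 d th thL thR : iota (side d thL thR) th -> iota (PSyn thL thR) (PPar d th)
| i_S3 th1 th2 th1' th2' : iota th1 th1' -> iota th2 th2' ->
    iota (PSyn th1 th2) (PSyn th1' th2').

Definition ciota (t u : ctrans) : Prop :=
  connected t u /\ exists tht thu, hat t tht /\ hat u thu /\ iota tht thu.

Definition square_rel (t t' : ctrans) : Prop :=
  exists u u', valid t /\ valid u /\ valid u' /\ valid t' /\
    src u = src t /\ src u' = tgt t /\ src t' = tgt u /\ tgt t' = tgt u' /\
    lab u' = lab u /\ tkey u' = tkey u /\ fw u' = fw u /\
    lab t' = lab t /\ tkey t' = tkey t /\ fw t' = fw t /\
    ciota t u.

Definition ev_eq : relation ctrans := clos_refl_sym_trans ctrans square_rel.

Definition core_indep (t u : ctrans) : Prop :=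
  exists t' u', ev_eq t t' /\ ev_eq u u' /\ src t' = src u' /\ ciota t' u'.

Definition fwdt (t : ctrans) : ctrans :=
  if fw t then t else CT (tgt t) (lab t) (tkey t) (src t) true.

Definition key_eq (t1 t2 : ctrans) : Prop :=
  tkey (fwdt t1) = tkey (fwdt t2) /\
  path_avoid (tkey (fwdt t1)) (tgt (fwdt t1)) (tgt (fwdt t2)).

Definition dkey_indep (t u : ctrans) : Prop :=
  src t = src u /\ tkey t <> tkey u /\
  exists u' t', valid u' /\ valid t' /\
    src u' = tgt t /\ src t' = tgt u /\ tgt u' = tgt t' /\
    lab u' = lab u /\ tkey u' = tkey u /\ fw u' = fw u /\
    lab t' = lab t /\ tkey t' = tkey t /\ fw t' = fw t.

Definition key_indep (t u : ctrans) : Prop :=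
  connected t u /\
  exists t' u', valid t' /\ valid u' /\ key_eq t t' /\ key_eq u u' /\
    dkey_indep t' u'.

End CCSK.

(* Independent proof labels always close a square, and two backward steps from
   one process either coincide or have distinct keys and independent labels.
   So backward steps avoiding a key are confluent and terminating, and
   processes joined by a path avoiding the key share a normal form; this turns
   key equivalence into event equivalence, while every generating square of
   event equivalence keeps the key and joins the targets by a step with
   another key.  A directly key independent pair spans a square of forward
   steps into a common process, whose corners give coinitial independent
   transitions in every combination of directions, while an independent
   coinitial pair closes a square. *)

From Stdlib Require Import List Relations Classical Lia Wf_nat.
Import ListNotations.
Set Implicit Arguments.
Unset Strict Implicit.

Section NormalForms.
Variables (A : Type) (R : relation A) (size : A -> nat).
Hypothesis R_size : forall x y, R x y -> size y < size x.
Hypothesis R_diamond : forall x y1 y2, R x y1 -> R x y2 ->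
  y1 = y2 \/ exists z, R y1 z /\ R y2 z.

Definition normal_form (x m : A) : Prop := clos_refl_trans_1n A R x m /\ forall y, ~ R m y.

Lemma normal_form_exists x : exists m, normal_form x m.
Proof.
  induction x as [x IH] using (well_founded_ind (well_founded_ltof A size)).
  destruct (classic (exists y, R x y)) as [[y Hy]|Hn].
  - destruct (IH y (R_size Hy)) as (m & Hm & Nm).
    exists m. split; [econstructor; eauto|exact Nm].
  - exists x. split; [constructor|]. intros y Hy. eauto.
Qed.

Lemma normal_form_unique x m1 m2 : normal_form x m1 -> normal_form x m2 -> m1 = m2.
Proof.
  revert m1 m2.
  induction x as [x IH] using (well_founded_ind (well_founded_ltof A size)).
  intros m1 m2 [[|y1 ? R1 H1] N1] [[|y2 ? R2 H2] N2].
  - reflexivity.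
  - exfalso. eapply N1; eauto.
  - exfalso. eapply N2; eauto.
  - destruct (R_diamond R1 R2) as [<-|(w & W1 & W2)].
    + exact (IH y1 (R_size R1) _ _ (conj H1 N1) (conj H2 N2)).
    + destruct (normal_form_exists w) as (m & Hm & Nm).
      transitivity m.
      * apply (IH y1 (R_size R1)); split; [exact H1|exact N1|econstructor; eauto|exact Nm].
      * symmetry. apply (IH y2 (R_size R2)); split; [exact H2|exact N2|econstructor; eauto|exact Nm].
Qed.

Lemma normal_form_conv (S : relation A) : (forall x y, S x y -> R x y \/ R y x) ->
  forall x y m, clos_refl_trans A S x y -> normal_form x m -> normal_form y m.
Proof.
  intros HS x y m Hxy. revert m. induction Hxy as [x y Hxy| |]; intros m Hm; auto.
  destruct (HS x y Hxy) as [Rxy|Ryx].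
  - destruct (normal_form_exists y) as (m' & Hm' & Nm').
    replace m with m'; [split; assumption|].
    apply (normal_form_unique (x := x)); [split; [econstructor; eauto|exact Nm']|exact Hm].
  - destruct Hm as [Hm Nm]. split; [econstructor; eauto|exact Nm].
Qed.
End NormalForms.

Section KeyIndependence.
Context {N : Type}.
Local Notation proc := (@proc N).
Local Notation plab := (@plab N).
Local Notation ctrans := (@ctrans N).

Definition pstep (P : proc) (th : plab) (b : bool) (Q : proc) : Prop :=
  if b then pfwd P th Q else pfwd Q th P.

Lemma pfwd_keys (X X' : proc) th : pfwd X th X' ->
  forall j, In j (keys X') <-> j = pkey th \/ In j (keys X).
Proof.
  induction 1; intro j; simpl; rewrite ?in_app_iff;
    repeat match goal with IH : forall j, In j _ <-> _ |- _ => rewrite IH; clear IH end;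
    intuition congruence.
Qed.

Lemma pfwd_keys_length (X X' : proc) th : pfwd X th X' -> length (keys X) < length (keys X').
Proof. induction 1; simpl; rewrite ?length_app; lia. Qed.

Lemma pfwd_key_tgt (X X' : proc) th : pfwd X th X' -> In (pkey th) (keys X').
Proof. intro H. apply (pfwd_keys H). auto. Qed.

Lemma pstep_keys_notin (X X' : proc) th b j : pstep X th b X' ->
  ~ In j (keys X) -> j <> pkey th -> ~ In j (keys X').
Proof.
  destruct b; simpl; intros H A B C; rewrite (pfwd_keys H) in *; tauto.
Qed.

Fixpoint wf_plab (th : plab) : Prop :=
  match th with
  | PAct _ _ => True
  | PPar _ th | PSum _ th => wf_plab th
  | PSyn thL thR => wf_plab thL /\ wf_plab thR /\ pkey thL = pkey thR
  end.

Lemma pstep_wf_plab (X X' : proc) th b : pstep X th b X' -> wf_plab th.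
Proof. destruct b; simpl; induction 1; simpl; auto. Qed.

Lemma iota_pkey_neq (th1 th2 : plab) : iota th1 th2 -> wf_plab th1 -> wf_plab th2 ->
  pkey th1 <> pkey th2.
Proof.
  induction 1 as [| | |[|] ? ? ? ? IH|[|] ? ? ? ? IH|]; simpl; intros W1 W2; auto.
  - destruct W2 as (? & ? & E). auto.
  - destruct W2 as (? & ? & E). rewrite E. auto.
  - destruct W1 as (? & ? & E). auto.
  - destruct W1 as (? & ? & E). rewrite E. auto.
  - destruct W1 as (? & ? & _), W2 as (? & ? & _). auto.
Qed.

Lemma iota_pstep_pkey_neq th1 th2 (X1 X1' X2 X2' : proc) b1 b2 : iota th1 th2 ->
  pstep X1 th1 b1 X1' -> pstep X2 th2 b2 X2' -> pkey th1 <> pkey th2.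
Proof. intros Hi H1 H2. eauto using iota_pkey_neq, pstep_wf_plab. Qed.

Lemma pstep_Nil_inv th b (Q : proc) : ~ pstep Nil th b Q.
Proof. destruct b; simpl; intro H; inversion H. Qed.

Lemma pstep_Pre_inv a (X : proc) th b Q : pstep (Pre a X) th b Q ->
  b = true /\ exists k, th = PAct a k /\ Q = KPre a k X /\ keys X = [].
Proof. destruct b; simpl; intro H; inversion H; subst; eauto 10. Qed.

Lemma pstep_KPre_inv a k (X : proc) th b Q : pstep (KPre a k X) th b Q ->
  (exists X', Q = KPre a k X' /\ pstep X th b X' /\ pkey th <> k) \/
  (b = false /\ th = PAct a k /\ Q = Pre a X /\ keys X = []).
Proof. destruct b; simpl; intro H; inversion H; subst; [left|right|left]; eauto 6. Qed.

Lemma pstep_Res_inv (X : proc) l th b Q : pstep (Res X l) th b Q ->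
  exists X', Q = Res X' l /\ pstep X th b X' /\ ell th <> Vis l /\ ell th <> Vis (compl l).
Proof. destruct b; simpl; intro H; inversion H; subst; eauto 10. Qed.

Lemma pstep_Sum_inv (X Y : proc) th b Q : pstep (Sum X Y) th b Q ->
  (exists th' X', th = PSum DL th' /\ Q = Sum X' Y /\ pstep X th' b X' /\ keys Y = []) \/
  (exists th' Y', th = PSum DR th' /\ Q = Sum X Y' /\ pstep Y th' b Y' /\ keys X = []).
Proof. destruct b; simpl; intro H; inversion H; subst; eauto 10. Qed.

Lemma pstep_Par_inv (X Y : proc) th b Q : pstep (Par X Y) th b Q ->
  (exists th' X', th = PPar DL th' /\ Q = Par X' Y /\ pstep X th' b X' /\
     ~ In (pkey th') (keys Y)) \/
  (exists th' Y', th = PPar DR th' /\ Q = Par X Y' /\ pstep Y th' b Y' /\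
     ~ In (pkey th') (keys X)) \/
  (exists thL thR X' Y' l, th = PSyn thL thR /\ Q = Par X' Y' /\
     pstep X thL b X' /\ pstep Y thR b Y' /\
     ell thL = Vis l /\ ell thR = Vis (compl l) /\ pkey thL = pkey thR).
Proof. destruct b; simpl; intro H; inversion H; subst; eauto 20. Qed.

Lemma pstep_KPre (X X' : proc) a k th b : pstep X th b X' -> pkey th <> k ->
  pstep (KPre a k X) th b (KPre a k X').
Proof. destruct b; simpl; intros; constructor; auto. Qed.

Lemma pstep_Res (X X' : proc) l th b : pstep X th b X' ->
  ell th <> Vis l -> ell th <> Vis (compl l) -> pstep (Res X l) th b (Res X' l).
Proof. destruct b; simpl; intros; constructor; auto. Qed.

Lemma pstep_SumL (X X' Y : proc) th b : pstep X th b X' -> keys Y = [] ->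
  pstep (Sum X Y) (PSum DL th) b (Sum X' Y).
Proof. destruct b; simpl; intros; constructor; auto. Qed.

Lemma pstep_SumR (X Y Y' : proc) th b : pstep Y th b Y' -> keys X = [] ->
  pstep (Sum X Y) (PSum DR th) b (Sum X Y').
Proof. destruct b; simpl; intros; constructor; auto. Qed.

Lemma pstep_ParL (X X' Y : proc) th b : pstep X th b X' -> ~ In (pkey th) (keys Y) ->
  pstep (Par X Y) (PPar DL th) b (Par X' Y).
Proof. destruct b; simpl; intros; constructor; auto. Qed.

Lemma pstep_ParR (X Y Y' : proc) th b : pstep Y th b Y' -> ~ In (pkey th) (keys X) ->
  pstep (Par X Y) (PPar DR th) b (Par X Y').
Proof. destruct b; simpl; intros; constructor; auto. Qed.

Lemma pstep_Syn (X X' Y Y' : proc) thL thR b l : pstep X thL b X' -> pstep Y thR b Y' ->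
  ell thL = Vis l -> ell thR = Vis (compl l) -> pkey thL = pkey thR ->
  pstep (Par X Y) (PSyn thL thR) b (Par X' Y').
Proof. destruct b; simpl; intros; econstructor; eauto. Qed.

Lemma pstep_ParL_frame (X X' Y Y' : proc) th b th' b' :
  pstep X th b X' -> ~ In (pkey th) (keys Y) -> pstep Y th' b' Y' -> pkey th <> pkey th' ->
  pstep (Par X Y') (PPar DL th) b (Par X' Y').
Proof. intros H K H' D. apply pstep_ParL; eauto using pstep_keys_notin. Qed.

Lemma pstep_ParR_frame (X X' Y Y' : proc) th b th' b' :
  pstep Y th b Y' -> ~ In (pkey th) (keys X) -> pstep X th' b' X' -> pkey th <> pkey th' ->
  pstep (Par X' Y) (PPar DR th) b (Par X' Y').
Proof. intros H K H' D. apply pstep_ParR; eauto using pstep_keys_notin. Qed.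

Definition iota_diamond (P : proc) : Prop :=
  forall th1 th2 b1 b2 Q R, iota th1 th2 -> pstep P th1 b1 Q -> pstep P th2 b2 R ->
  exists S, pstep Q th2 b2 S /\ pstep R th1 b1 S.

Lemma iota_diamond_Nil : iota_diamond Nil.
Proof. intros ? ? ? ? ? ? _ H. contradict H. apply pstep_Nil_inv. Qed.

Lemma iota_diamond_Pre a (X : proc) : iota_diamond (Pre a X).
Proof. intros ? ? ? ? ? ? Hi H. apply pstep_Pre_inv in H as (_ & k & -> & _). inversion Hi. Qed.

Lemma iota_diamond_KPre a k (X : proc) : iota_diamond X -> iota_diamond (KPre a k X).
Proof.
  intros HX th1 th2 b1 b2 Q R Hi H1 H2.
  apply pstep_KPre_inv in H1 as [(X1 & -> & S1 & K1)|(_ & -> & _)]; [|inversion Hi].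
  apply pstep_KPre_inv in H2 as [(X2 & -> & S2 & K2)|(_ & -> & _)]; [|inversion Hi].
  destruct (HX _ _ _ _ _ _ Hi S1 S2) as (S & T1 & T2).
  exists (KPre a k S). split; apply pstep_KPre; auto.
Qed.

Lemma iota_diamond_Res (X : proc) l : iota_diamond X -> iota_diamond (Res X l).
Proof.
  intros HX th1 th2 b1 b2 Q R Hi H1 H2.
  apply pstep_Res_inv in H1 as (X1 & -> & S1 & L1 & L1').
  apply pstep_Res_inv in H2 as (X2 & -> & S2 & L2 & L2').
  destruct (HX _ _ _ _ _ _ Hi S1 S2) as (S & T1 & T2).
  exists (Res S l). split; apply pstep_Res; auto.
Qed.

Lemma iota_diamond_Sum (X Y : proc) : iota_diamond X -> iota_diamond Y -> iota_diamond (Sum X Y).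
Proof.
  intros HX HY th1 th2 b1 b2 Q R Hi H1 H2.
  apply pstep_Sum_inv in H1 as [(t1 & X1 & -> & -> & S1 & K1)|(t1 & Y1 & -> & -> & S1 & K1)];
  apply pstep_Sum_inv in H2 as [(t2 & X2 & -> & -> & S2 & K2)|(t2 & Y2 & -> & -> & S2 & K2)];
  inversion Hi as [? ? ? Hio| | | | |]; subst.
  - destruct (HX _ _ _ _ _ _ Hio S1 S2) as (S & T1 & T2).
    exists (Sum S Y). split; apply pstep_SumL; auto.
  - destruct (HY _ _ _ _ _ _ Hio S1 S2) as (S & T1 & T2).
    exists (Sum X S). split; apply pstep_SumR; auto.
Qed.

Lemma iota_diamond_Par (X Y : proc) : iota_diamond X -> iota_diamond Y -> iota_diamond (Par X Y).
Proof.
  intros HX HY th1 th2 b1 b2 Q R Hi H1 H2.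
  apply pstep_Par_inv in H1 as [(t1 & X1 & -> & -> & S1 & K1)|[(t1 & Y1 & -> & -> & S1 & K1)
    |(tL1 & tR1 & X1 & Y1 & l1 & -> & -> & SL1 & SR1 & L1 & L1' & K1)]];
  apply pstep_Par_inv in H2 as [(t2 & X2 & -> & -> & S2 & K2)|[(t2 & Y2 & -> & -> & S2 & K2)
    |(tL2 & tR2 & X2 & Y2 & l2 & -> & -> & SL2 & SR2 & L2 & L2' & K2)]];
  inversion Hi; subst; simpl in *.
  - destruct (HX _ _ _ _ _ _ (ltac:(assumption) : iota t1 t2) S1 S2) as (S & T1 & T2).
    exists (Par S Y). split; apply pstep_ParL; auto.
  - exists (Par X1 Y2). split; eauto using pstep_ParL_frame, pstep_ParR_frame.
  - destruct (HX _ _ _ _ _ _ (ltac:(assumption) : iota t1 tL2) S1 SL2) as (S & T1 & T2).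
    exists (Par S Y2). split; [eauto using pstep_Syn|].
    apply (pstep_ParL_frame T2 K1 SR2). rewrite <- K2. eauto using iota_pstep_pkey_neq.
  - exists (Par X2 Y1). split; eauto using pstep_ParL_frame, pstep_ParR_frame.
  - destruct (HY _ _ _ _ _ _ (ltac:(assumption) : iota t1 t2) S1 S2) as (S & T1 & T2).
    exists (Par X S). split; apply pstep_ParR; auto.
  - destruct (HY _ _ _ _ _ _ (ltac:(assumption) : iota t1 tR2) S1 SR2) as (S & T1 & T2).
    exists (Par X2 S). split; [eauto using pstep_Syn|].
    apply (pstep_ParR_frame T2 K1 SL2). rewrite K2. eauto using iota_pstep_pkey_neq.
  - destruct (HX _ _ _ _ _ _ (ltac:(assumption) : iota tL1 t2) SL1 S2) as (S & T1 & T2).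
    exists (Par S Y1). split; [|eauto using pstep_Syn].
    apply (pstep_ParL_frame T1 K2 SR1). rewrite <- K1. apply not_eq_sym.
    eauto using iota_pstep_pkey_neq.
  - destruct (HY _ _ _ _ _ _ (ltac:(assumption) : iota tR1 t2) SR1 S2) as (S & T1 & T2).
    exists (Par X1 S). split; [|eauto using pstep_Syn].
    apply (pstep_ParR_frame T1 K2 SL1). rewrite K1. apply not_eq_sym.
    eauto using iota_pstep_pkey_neq.
  - destruct (HX _ _ _ _ _ _ (ltac:(assumption) : iota tL1 tL2) SL1 SL2) as (S & T1 & T2).
    destruct (HY _ _ _ _ _ _ (ltac:(assumption) : iota tR1 tR2) SR1 SR2) as (S' & T1' & T2').
    exists (Par S S'). split; eauto using pstep_Syn.
Qed.

Lemma iota_pstep_diamond (P Q R : proc) th1 th2 b1 b2 : iota th1 th2 ->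
  pstep P th1 b1 Q -> pstep P th2 b2 R -> exists S, pstep Q th2 b2 S /\ pstep R th1 b1 S.
Proof.
  revert th1 th2 b1 b2 Q R. change (iota_diamond P).
  induction P; auto using iota_diamond_Nil, iota_diamond_Pre, iota_diamond_KPre,
    iota_diamond_Res, iota_diamond_Sum, iota_diamond_Par.
Qed.

Lemma pstep_back_key_notin (Y Y' : proc) th j : pstep Y th false Y' ->
  ~ In j (keys Y) -> j <> pkey th.
Proof. intros H K ->. exact (K (pfwd_key_tgt H)). Qed.

Definition back_dichotomy (Y : proc) : Prop :=
  forall Y1 Y2 th1 th2, pstep Y th1 false Y1 -> pstep Y th2 false Y2 ->
  (th1 = th2 /\ Y1 = Y2) \/ (pkey th1 <> pkey th2 /\ iota th1 th2).

Lemma back_dichotomy_Nil : back_dichotomy Nil.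
Proof. intros ? ? ? ? H. contradict H. apply pstep_Nil_inv. Qed.

Lemma back_dichotomy_Pre a (X : proc) : back_dichotomy (Pre a X).
Proof. intros ? ? ? ? H. apply pstep_Pre_inv in H as [[=] _]. Qed.

Lemma back_dichotomy_KPre a k (X : proc) : back_dichotomy X -> back_dichotomy (KPre a k X).
Proof.
  intros IH Y1 Y2 th1 th2 H1 H2.
  apply pstep_KPre_inv in H1 as [(Z1 & -> & S1 & K1)|(_ & -> & -> & E1)];
  apply pstep_KPre_inv in H2 as [(Z2 & -> & S2 & K2)|(_ & -> & -> & E2)].
  - destruct (IH _ _ _ _ S1 S2) as [[-> ->]|]; auto.
  - apply pfwd_key_tgt in S1. rewrite E2 in S1. contradiction.
  - apply pfwd_key_tgt in S2. rewrite E1 in S2. contradiction.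
  - auto.
Qed.

Lemma back_dichotomy_Res (X : proc) l : back_dichotomy X -> back_dichotomy (Res X l).
Proof.
  intros IH Y1 Y2 th1 th2 H1 H2.
  apply pstep_Res_inv in H1 as (Z1 & -> & S1 & _).
  apply pstep_Res_inv in H2 as (Z2 & -> & S2 & _).
  destruct (IH _ _ _ _ S1 S2) as [[-> ->]|]; auto.
Qed.

Lemma back_dichotomy_Sum (X Y : proc) :
  back_dichotomy X -> back_dichotomy Y -> back_dichotomy (Sum X Y).
Proof.
  intros IHX IHY Y1 Y2 th1 th2 H1 H2.
  apply pstep_Sum_inv in H1 as [(t1 & Z1 & -> & -> & S1 & K1)|(t1 & Z1 & -> & -> & S1 & K1)];
  apply pstep_Sum_inv in H2 as [(t2 & Z2 & -> & -> & S2 & K2)|(t2 & Z2 & -> & -> & S2 & K2)].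
  - destruct (IHX _ _ _ _ S1 S2) as [[-> ->]|[]]; [left|right]; auto using iota.
  - apply pfwd_key_tgt in S2. rewrite K1 in S2. contradiction.
  - apply pfwd_key_tgt in S1. rewrite K2 in S1. contradiction.
  - destruct (IHY _ _ _ _ S1 S2) as [[-> ->]|[]]; [left|right]; auto using iota.
Qed.

Lemma back_dichotomy_Par (X Y : proc) :
  back_dichotomy X -> back_dichotomy Y -> back_dichotomy (Par X Y).
Proof.
  intros IHX IHY Y1 Y2 th1 th2 H1 H2.
  apply pstep_Par_inv in H1 as [(t1 & Z1 & -> & -> & S1 & K1)|[(t1 & Z1 & -> & -> & S1 & K1)
    |(tL1 & tR1 & X1 & W1 & l1 & -> & -> & SL1 & SR1 & _ & _ & K1)]];
  apply pstep_Par_inv in H2 as [(t2 & Z2 & -> & -> & S2 & K2)|[(t2 & Z2 & -> & -> & S2 & K2)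
    |(tL2 & tR2 & X2 & W2 & l2 & -> & -> & SL2 & SR2 & _ & _ & K2)]]; simpl.
  - destruct (IHX _ _ _ _ S1 S2) as [[-> ->]|[]]; [left|right]; auto using iota.
  - pose proof (pstep_back_key_notin S2 K1).
    right. split; [|apply (i_P2 DL)]; auto.
  - pose proof (pstep_back_key_notin SR2 K1).
    destruct (IHX _ _ _ _ S1 SL2) as [[-> ->]|[]]; [congruence|].
    right. split; [|apply (i_S1 DL)]; auto.
  - pose proof (pstep_back_key_notin S2 K1).
    right. split; [|apply (i_P2 DR)]; auto.
  - destruct (IHY _ _ _ _ S1 S2) as [[-> ->]|[]]; [left|right]; auto using iota.
  - pose proof (pstep_back_key_notin SL2 K1).
    destruct (IHY _ _ _ _ S1 SR2) as [[-> ->]|[]]; [congruence|].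
    right. split; [congruence|apply (i_S1 DR)]; auto.
  - pose proof (pstep_back_key_notin SR1 K2).
    destruct (IHX _ _ _ _ SL1 S2) as [[-> ->]|[]]; [congruence|].
    right. split; [|apply (i_S2 DL)]; auto.
  - pose proof (pstep_back_key_notin SL1 K2).
    destruct (IHY _ _ _ _ SR1 S2) as [[-> ->]|[]]; [congruence|].
    right. split; [congruence|apply (i_S2 DR)]; auto.
  - destruct (IHX _ _ _ _ SL1 SL2) as [[-> ->]|[]];
    destruct (IHY _ _ _ _ SR1 SR2) as [[-> ->]|[]]; try congruence; auto using iota.
Qed.

Lemma pstep_back_cases (Y Y1 Y2 : proc) th1 th2 : pstep Y th1 false Y1 -> pstep Y th2 false Y2 ->
  (th1 = th2 /\ Y1 = Y2) \/ (pkey th1 <> pkey th2 /\ iota th1 th2).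
Proof.
  revert Y1 Y2 th1 th2. change (back_dichotomy Y).
  induction Y; auto using back_dichotomy_Nil, back_dichotomy_Pre, back_dichotomy_KPre,
    back_dichotomy_Res, back_dichotomy_Sum, back_dichotomy_Par.
Qed.

Lemma pfwd_into_same_key (Y Y1 Y2 : proc) th1 th2 : pfwd Y1 th1 Y -> pfwd Y2 th2 Y ->
  pkey th1 = pkey th2 -> th1 = th2 /\ Y1 = Y2.
Proof. intros H1 H2 K. destruct (pstep_back_cases H1 H2) as [|[]]; tauto. Qed.

Lemma pfwd_into_square (T A1 A2 : proc) th1 th2 : pfwd A1 th1 T -> pfwd A2 th2 T ->
  pkey th1 <> pkey th2 -> iota th1 th2 /\ exists Z, pfwd Z th2 A1 /\ pfwd Z th1 A2.
Proof.
  intros H1 H2 K.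
  destruct (pstep_back_cases H1 H2) as [[-> _]|[_ Hi]]; [tauto|].
  split; [exact Hi|]. exact (iota_pstep_diamond (b1 := false) (b2 := false) Hi H1 H2).
Qed.

Lemma path_sym (P Q : proc) : path P Q -> path Q P.
Proof.
  induction 1 as [P Q (a & k & H)| |]; [|apply rt_refl|eapply rt_trans; eauto].
  apply rt_step. exists a, k. tauto.
Qed.

Lemma reachable_path (P Q : proc) : reachable P -> path P Q -> reachable Q.
Proof. intros (X0 & E & H) H'. exists X0. split; [exact E|eapply rt_trans; eauto]. Qed.

Lemma pstep_path (P Q : proc) th b : pstep P th b Q -> path P Q.
Proof.
  intro H. apply rt_step. exists (ell th), (pkey th).
  destruct b; [left|right]; exists th; auto.
Qed.

Lemma pstep_path_avoid (P Q : proc) th b k : pstep P th b Q -> pkey th <> k ->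
  path_avoid k P Q.
Proof.
  intros H K. apply rt_step. exists (ell th), (pkey th).
  split; [exact K|]. destruct b; [left|right]; exists th; auto.
Qed.

Lemma reachable_pstep (P Q : proc) th b : reachable P -> pstep P th b Q -> reachable Q.
Proof. eauto using reachable_path, pstep_path. Qed.

Lemma path_avoid_sym k (P Q : proc) : path_avoid k P Q -> path_avoid k Q P.
Proof.
  induction 1 as [P Q (a & j & K & H)| |]; [|apply rt_refl|eapply rt_trans; eauto].
  apply rt_step. exists a, j. tauto.
Qed.

Definition bstep_avoid (k : key) (Y Y' : proc) : Prop :=
  exists th, pfwd Y' th Y /\ pkey th <> k.

Lemma bstep_avoid_size k (Y Y' : proc) : bstep_avoid k Y Y' -> length (keys Y') < length (keys Y).
Proof. intros (th & H & _). exact (pfwd_keys_length H). Qed.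

Lemma bstep_avoid_diamond k (Y Y1 Y2 : proc) : bstep_avoid k Y Y1 -> bstep_avoid k Y Y2 ->
  Y1 = Y2 \/ exists Z, bstep_avoid k Y1 Z /\ bstep_avoid k Y2 Z.
Proof.
  intros (th1 & H1 & K1) (th2 & H2 & K2).
  destruct (pstep_back_cases H1 H2) as [[_ ->]|[_ Hi]]; [now left|right].
  destruct (iota_pstep_diamond (b1 := false) (b2 := false) Hi H1 H2) as (Z & Z1 & Z2).
  exists Z. split; eexists; eauto.
Qed.

Lemma path_avoid_normal_form k (Y Y' M : proc) : path_avoid k Y Y' ->
  normal_form (bstep_avoid k) Y M -> normal_form (bstep_avoid k) Y' M.
Proof.
  apply normal_form_conv with (size := fun Y => length (keys Y)).
  - apply bstep_avoid_size.
  - apply bstep_avoid_diamond.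
  - intros P Q (a & j & K & [(th & H & <- & <-)|(th & H & <- & <-)]);
      [right|left]; exists th; auto.
Qed.

Lemma bstep_avoid_normal_form_exists k (Y : proc) : exists M, normal_form (bstep_avoid k) Y M.
Proof.
  apply normal_form_exists with (size := fun Y => length (keys Y)).
  apply bstep_avoid_size.
Qed.

Definition ctrans_of (P : proc) (th : plab) (b : bool) (Q : proc) : ctrans :=
  CT P (ell th) (pkey th) Q b.

Definition edge (A : proc) (th : plab) (B : proc) (b : bool) : ctrans :=
  if b then ctrans_of A th true B else ctrans_of B th false A.

Lemma fwdt_edge (A B : proc) th b : fwdt (edge A th B b) = ctrans_of A th true B.
Proof. destruct b; reflexivity. Qed.

Lemma valid_ctrans_of (P Q : proc) th b : reachable P -> pstep P th b Q ->
  valid (ctrans_of P th b Q).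
Proof. intros RP H. split; [exact RP|]. unfold cstep; destruct b; exists th; auto. Qed.

Lemma fw_edge (A B : proc) th b : fw (edge A th B b) = b.
Proof. destruct b; reflexivity. Qed.

Lemma valid_edge (A B : proc) th b : reachable A -> pfwd A th B -> valid (edge A th B b).
Proof.
  intros RA H. destruct b.
  - exact (valid_ctrans_of RA (b := true) H).
  - exact (valid_ctrans_of (reachable_pstep RA (b := true) H) (b := false) H).
Qed.

Lemma hat_ctrans_of (t : ctrans) th : hat t th -> t = ctrans_of (src t) th (fw t) (tgt t).
Proof. destruct t as [P l k Q b]. intros (_ & L & K). simpl in *. subst. reflexivity. Qed.

Lemma valid_hat (t : ctrans) : valid t -> exists th, hat t th.
Proof.
  intros [_ C]. unfold cstep, hat in *.
  destruct (fw t); destruct C as (th & H & L & K); exists th; auto.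
Qed.

Lemma valid_as_edge (t : ctrans) : valid t ->
  exists A th B, pfwd A th B /\ reachable A /\ t = edge A th B (fw t).
Proof.
  intros Vt. destruct (valid_hat Vt) as [th Ht].
  pose proof (hat_ctrans_of Ht) as Et. destruct Ht as [H _].
  destruct (fw t) eqn:F.
  - exists (src t), th, (tgt t). split; [exact H|]. split; [apply Vt|exact Et].
  - exists (tgt t), th, (src t). split; [exact H|]. split; [|exact Et].
    exact (reachable_pstep (proj1 Vt) (b := false) H).
Qed.

Lemma valid_path_avoid (u : ctrans) k : valid u -> tkey u <> k -> path_avoid k (src u) (tgt u).
Proof.
  intros Vu K. destruct (valid_hat Vu) as [th Ht].
  destruct Ht as (H & _ & Kt). rewrite <- Kt in K. exact (pstep_path_avoid H K).
Qed.

Lemma ciota_ctrans_of (P Q R : proc) th1 th2 b1 b2 : pstep P th1 b1 Q -> pstep P th2 b2 R ->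
  iota th1 th2 -> ciota (ctrans_of P th1 b1 Q) (ctrans_of P th2 b2 R).
Proof.
  intros H1 H2 Hi. split; [exact (pstep_path H2)|].
  exists th1, th2. repeat split; assumption.
Qed.

Lemma ciota_tkey_neq (t u : ctrans) : ciota t u -> tkey t <> tkey u.
Proof.
  intros (_ & tht & thu & (Ht & _ & <-) & (Hu & _ & <-) & Hi).
  exact (iota_pstep_pkey_neq Hi Ht Hu).
Qed.

Lemma square_rel_ctrans_of (P Q R S : proc) th1 th2 b1 b2 : reachable P ->
  pstep P th1 b1 Q -> pstep P th2 b2 R -> pstep Q th2 b2 S -> pstep R th1 b1 S ->
  iota th1 th2 -> square_rel (ctrans_of P th1 b1 Q) (ctrans_of R th1 b1 S).
Proof.
  intros RP H1 H2 H3 H4 Hi.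
  assert (RQ : reachable Q) by exact (reachable_pstep RP H1).
  assert (RR : reachable R) by exact (reachable_pstep RP H2).
  exists (ctrans_of P th2 b2 R), (ctrans_of Q th2 b2 S).
  do 4 (split; [auto using valid_ctrans_of|]).
  do 10 (split; [reflexivity|]).
  auto using ciota_ctrans_of.
Qed.

Lemma dkey_indep_ctrans_of (P Q R S : proc) th1 th2 b1 b2 : reachable P ->
  pstep P th1 b1 Q -> pstep P th2 b2 R -> pstep Q th2 b2 S -> pstep R th1 b1 S ->
  pkey th1 <> pkey th2 -> dkey_indep (ctrans_of P th1 b1 Q) (ctrans_of P th2 b2 R).
Proof.
  intros RP H1 H2 H3 H4 K.
  assert (RQ : reachable Q) by exact (reachable_pstep RP H1).
  assert (RR : reachable R) by exact (reachable_pstep RP H2).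
  split; [reflexivity|split; [exact K|]].
  exists (ctrans_of Q th2 b2 S), (ctrans_of R th1 b1 S).
  do 2 (split; [auto using valid_ctrans_of|]).
  repeat split.
Qed.

Lemma square_ev_eq (Z A1 A2 T : proc) th1 th2 :
  pfwd Z th2 A1 -> pfwd A1 th1 T -> pfwd Z th1 A2 -> pfwd A2 th2 T ->
  iota th1 th2 -> reachable Z -> forall b, ev_eq (edge Z th1 A2 b) (edge A1 th1 T b).
Proof.
  intros H1 H2 H3 H4 Hi RZ [|]; simpl.
  - apply rst_step. exact (square_rel_ctrans_of (b1 := true) (b2 := true) RZ H3 H1 H4 H2 Hi).
  - apply rst_sym, rst_step.
    assert (RT : reachable T) by exact (reachable_pstep (reachable_pstep RZ (b := true) H1) (b := true) H2).
    exact (square_rel_ctrans_of (b1 := false) (b2 := false) RT H2 H4 H1 H3 Hi).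
Qed.

Lemma edge_ev_eq_normal_form th (B M : proc) :
  clos_refl_trans_1n proc (bstep_avoid (pkey th)) B M -> forall A, pfwd A th B -> reachable A ->
  exists A', pfwd A' th M /\ forall b, ev_eq (edge A th B b) (edge A' th M b).
Proof.
  induction 1 as [B|B Y M (thj & Hj & Kj) _ IH]; intros A H RA.
  - exists A. split; [exact H|]. intro b. apply rst_refl.
  - destruct (pfwd_into_square H Hj (not_eq_sym Kj)) as (Hi & Z & HZA & HZY).
    assert (RZ : reachable Z) by exact (reachable_pstep RA (b := false) HZA).
    destruct (IH Z HZY RZ) as (A' & HA' & E).
    exists A'. split; [exact HA'|]. intro b.
    eapply rst_trans; [apply rst_sym, (square_ev_eq HZA H HZY Hj Hi RZ)|apply E].
Qed.

(* Both transitions are pushed, through generating squares, down to the common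
   normal form of their targets under backward steps avoiding their key; there
   the forward step with that key is unique. *)
Lemma key_eq_ev_eq (t1 t2 : ctrans) : valid t1 -> valid t2 -> fw t1 = fw t2 ->
  key_eq t1 t2 -> ev_eq t1 t2.
Proof.
  intros V1 V2 F.
  destruct (valid_as_edge V1) as (A1 & th1 & B1 & H1 & R1 & Et1).
  destruct (valid_as_edge V2) as (A2 & th2 & B2 & H2 & R2 & Et2).
  rewrite Et1, Et2, <- F. unfold key_eq. rewrite !fwdt_edge. simpl. intros [K P].
  destruct (bstep_avoid_normal_form_exists (pkey th1) B1) as (M & NF1).
  pose proof (path_avoid_normal_form P NF1) as [NF2 _]. rewrite K in NF2.
  destruct (edge_ev_eq_normal_form (proj1 NF1) H1 R1) as (M1 & HM1 & E1).
  destruct (edge_ev_eq_normal_form NF2 H2 R2) as (M2 & HM2 & E2).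
  destruct (pfwd_into_same_key HM1 HM2 K) as [-> ->].
  eapply rst_trans; [apply E1|apply rst_sym, E2].
Qed.

Lemma fwdt_tkey (t : ctrans) : tkey (fwdt t) = tkey t.
Proof. unfold fwdt. destruct (fw t); reflexivity. Qed.

Lemma key_eq_sym (t1 t2 : ctrans) : key_eq t1 t2 -> key_eq t2 t1.
Proof. intros [K P]. split; [congruence|]. rewrite <- K. exact (path_avoid_sym P). Qed.

Lemma key_eq_trans (t1 t2 t3 : ctrans) : key_eq t1 t2 -> key_eq t2 t3 -> key_eq t1 t3.
Proof.
  intros [K P] [K' P']. split; [congruence|].
  eapply rt_trans; [exact P|]. rewrite K. exact P'.
Qed.

Lemma square_rel_key_eq (t t' : ctrans) : square_rel t t' -> key_eq t t'.
Proof.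
  intros (u & u' & _ & Vu & Vu' & _ & E1 & E2 & E3 & E4 & _ & Ku & _ & _ & Kt & Ft & Ci).
  pose proof (ciota_tkey_neq Ci) as K.
  unfold key_eq, fwdt. rewrite Ft. destruct (fw t); simpl; split; try congruence.
  - rewrite <- E2, E4. apply valid_path_avoid; congruence.
  - rewrite <- E1, E3. apply valid_path_avoid; congruence.
Qed.

Lemma ev_eq_key_eq (t1 t2 : ctrans) : ev_eq t1 t2 -> key_eq t1 t2.
Proof.
  induction 1 as [? ? H| t| | ].
  - exact (square_rel_key_eq H).
  - split; [reflexivity|apply rt_refl].
  - apply key_eq_sym; assumption.
  - eapply key_eq_trans; eassumption.
Qed.

Lemma ev_eq_valid (t1 t2 : ctrans) : ev_eq t1 t2 -> valid t1 <-> valid t2.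
Proof.
  induction 1 as [? ? (u & u' & V1 & _ & _ & V2 & _)| | |]; tauto.
Qed.

Lemma ev_eq_path (t1 t2 : ctrans) : ev_eq t1 t2 -> path (src t1) (src t2).
Proof.
  induction 1 as [? ? (u & u' & _ & Vu & _ & _ & E1 & _ & E3 & _)| | |].
  - rewrite <- E1, E3. destruct (valid_hat Vu) as [th [H _]]. exact (pstep_path H).
  - apply rt_refl.
  - apply path_sym; assumption.
  - eapply rt_trans; eassumption.
Qed.

Lemma key_eq_edge (t : ctrans) (A B : proc) th b : tkey t = pkey th ->
  path_avoid (pkey th) (tgt (fwdt t)) B -> key_eq t (edge A th B b).
Proof. intros K P. unfold key_eq. rewrite fwdt_edge, fwdt_tkey. simpl. rewrite K. auto. Qed.

Lemma dkey_indep_common_target (t u : ctrans) : valid t -> valid u -> dkey_indep t u ->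
  exists T A1 A2 th1 th2, pfwd A1 th1 T /\ pfwd A2 th2 T /\ reachable T /\
    pkey th1 <> pkey th2 /\
    (forall b, key_eq t (edge A1 th1 T b)) /\ (forall b, key_eq u (edge A2 th2 T b)).
Proof.
  intros Vt Vu (Es & K & u' & t' & Vu' & Vt' & E1 & E2 & E3 & _ & Ku & Fu & _ & Kt & Ft).
  destruct (valid_hat Vt) as (th1 & H1 & _ & K1), (valid_hat Vu) as (th2 & H2 & _ & K2),
    (valid_hat Vt') as (th1' & H1' & _ & K1'), (valid_hat Vu') as (th2' & H2' & _ & K2').
  pose proof (proj1 Vt) as RP.
  destruct t as [P0 l1 k1 Q []], u as [P l2 k2 R []], t' as [R' l1' k1' S []],
    u' as [Q' l2' k2' S' []]; simpl in *; subst; try discriminate.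
  - exists S, R, Q, th1', th2'.
    assert (RQ : reachable Q) by exact (reachable_pstep RP (b := true) H1).
    split; [exact H1'|split; [exact H2'|split; [exact (reachable_pstep RQ (b := true) H2')|]]].
    split; [congruence|split]; intro b; apply key_eq_edge; simpl; try congruence.
    + apply (pstep_path_avoid (b := true) H2'). congruence.
    + apply (pstep_path_avoid (b := true) H1'). congruence.
  - exists Q, P, S, th1, th2'.
    split; [exact H1|split; [exact H2'|split; [exact (reachable_pstep RP (b := true) H1)|]]].
    split; [congruence|split]; intro b; apply key_eq_edge; simpl; try congruence.
    + apply rt_refl.
    + apply (pstep_path_avoid (b := true) H1). congruence.
  - exists R, S, P, th1', th2.
    split; [exact H1'|split; [exact H2|split; [exact (reachable_pstep RP (b := true) H2)|]]].
    split; [congruence|split]; intro b; apply key_eq_edge; simpl; try congruence.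
    + apply (pstep_path_avoid (b := true) H2). congruence.
    + apply rt_refl.
  - exists P, Q, R, th1, th2.
    split; [exact H1|split; [exact H2|split; [exact RP|]]].
    split; [congruence|split]; intro b; apply key_eq_edge; simpl; solve [congruence|apply rt_refl].
Qed.

(* The corner of the square from which [th1] leaves in direction [b1] and [th2]
   in direction [b2]. *)
Lemma square_corner_ciota (Z A1 A2 T : proc) th1 th2 (b1 b2 : bool) :
  pfwd Z th2 A1 -> pfwd A1 th1 T -> pfwd Z th1 A2 -> pfwd A2 th2 T -> iota th1 th2 ->
  let t := if b2 then edge Z th1 A2 b1 else edge A1 th1 T b1 in
  let u := if b1 then edge Z th2 A1 b2 else edge A2 th2 T b2 in
  src t = src u /\ ciota t u.
Proof.
  intros H1 H2 H3 H4 Hi.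
  destruct b1, b2; simpl; split; try reflexivity; apply ciota_ctrans_of; assumption.
Qed.

Lemma valid_path (t : ctrans) : valid t -> path (src t) (tgt t).
Proof. intros Vt. destruct (valid_hat Vt) as (th & H & _). exact (pstep_path H). Qed.

Lemma key_indep_core_indep (t u : ctrans) : valid t -> valid u ->
  key_indep t u -> core_indep t u.
Proof.
  intros Vt Vu (_ & t' & u' & Vt' & Vu' & Kt & Ku & Dk).
  destruct (dkey_indep_common_target Vt' Vu' Dk) as (T & A1 & A2 & th1 & th2 & H1 & H2 & RT & K & Kt' & Ku').
  destruct (pfwd_into_square H1 H2 K) as (Hi & Z & HZ1 & HZ2).
  destruct (pfwd_into_square H2 H1 (not_eq_sym K)) as (Hi' & _).
  assert (RA1 : reachable A1) by exact (reachable_pstep RT (b := false) H1).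
  assert (RA2 : reachable A2) by exact (reachable_pstep RT (b := false) H2).
  assert (RZ : reachable Z) by exact (reachable_pstep RA1 (b := false) HZ1).
  assert (Et : ev_eq t (edge A1 th1 T (fw t))).
  { apply key_eq_ev_eq; [exact Vt|exact (valid_edge _ RA1 H1)|now rewrite fw_edge|].
    exact (key_eq_trans Kt (Kt' _)). }
  assert (Eu : ev_eq u (edge A2 th2 T (fw u))).
  { apply key_eq_ev_eq; [exact Vu|exact (valid_edge _ RA2 H2)|now rewrite fw_edge|].
    exact (key_eq_trans Ku (Ku' _)). }
  pose proof (square_ev_eq HZ1 H1 HZ2 H2 Hi RZ (fw t)) as St.
  pose proof (square_ev_eq HZ2 H2 HZ1 H1 Hi' RZ (fw u)) as Su.
  destruct (square_corner_ciota (fw t) (fw u) HZ1 H1 HZ2 H2 Hi) as [Es Ci].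
  exists (if fw u then edge Z th1 A2 (fw t) else edge A1 th1 T (fw t)),
    (if fw t then edge Z th2 A1 (fw u) else edge A2 th2 T (fw u)).
  split; [|split; [|split; [exact Es|exact Ci]]].
  - destruct (fw u); [|exact Et]. eapply rst_trans; [exact Et|apply rst_sym, St].
  - destruct (fw t); [|exact Eu]. eapply rst_trans; [exact Eu|apply rst_sym, Su].
Qed.

Lemma ciota_dkey_indep (t u : ctrans) : valid t -> src t = src u -> ciota t u ->
  dkey_indep t u.
Proof.
  intros Vt Es Ci. pose proof (ciota_tkey_neq Ci) as K.
  destruct Ci as (_ & tht & thu & Ht & Hu & Hi).
  rewrite (hat_ctrans_of Ht), (hat_ctrans_of Hu), <- Es.
  destruct Ht as (Ht & _ & Kt), Hu as (Hu & _ & Ku). rewrite <- Es in Hu.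
  destruct (iota_pstep_diamond Hi Ht Hu) as (S & T1 & T2).
  apply (dkey_indep_ctrans_of (proj1 Vt) Ht Hu T1 T2). congruence.
Qed.

Lemma core_indep_key_indep (t u : ctrans) : valid t -> valid u ->
  core_indep t u -> key_indep t u.
Proof.
  intros Vt Vu (t' & u' & Et & Eu & Es & Ci).
  assert (Vt' : valid t') by exact (proj1 (ev_eq_valid Et) Vt).
  assert (Vu' : valid u') by exact (proj1 (ev_eq_valid Eu) Vu).
  split.
  - unfold connected. eapply rt_trans; [exact (ev_eq_path Et)|]. rewrite Es.
    eapply rt_trans; [exact (path_sym (ev_eq_path Eu))|exact (valid_path Vu)].
  - exists t', u'. do 2 (split; [assumption|]).
    split; [apply ev_eq_key_eq; assumption|]. split; [apply ev_eq_key_eq; assumption|].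
    exact (ciota_dkey_indep Vt' Es Ci).
Qed.

End KeyIndependence.

Theorem proposition6p12 (N : Type) (t u : @ctrans N) :
  valid t -> valid u -> (key_indep t u <-> core_indep t u).
Proof.
  intros Vt Vu. split; [apply key_indep_core_indep|apply core_indep_key_indep]; assumption.
Qed.
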